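(* In the setting of the context, for every resolution $\mathcal{A}$ and every unit $G$, the set of units that are visible to $G$ in $\mathcal{A}$ is countable.
   Context: Formulas are built from atoms by $\neg$ (on atoms only), binary $\wedge,\vee$ and unary $!$ (branching recurrence) and $?$ (branching corecurrence). Units. Fix a formula $\mathbb{F}_0$. Oformulas are occurrences of subformulas of $\mathbb{F}_0$. Politerals are occurrences of literals $P$ or $\neg P$ not in the scope of $\neg$. The modal depth of an oformula is the number of its proper superoccurrences of the form $!E$ or $?E$. A unit is $E[\vec x]$, with $E$ an oformula and $\vec x$ a tuple of infinite bitstrings of length equal to the modal depth of $E$. Parenthood: $G_i[\vec x]$ ($i=0,1$) are the children of $(G_0\wedge G_1)[\vec x]$ and of $(G_0\vee G_1)[\vec x]$; the $G[\vec x,y]$ for all infinite bitstrings $y$ are the children of $!G[\vec x]$ and of $?G[\vec x]$. Subunit and superunit are the reflexive-transitive closures of child and its converse. The $\mathbb{F}_0$-origin $\tilde E$ of $E[\vec x]$ is $E$. Politeral, $!$- and $?$-units are defined by their origin. The smallest common superunit of two units is their common superunit lying below all common superunits. Resolutions and driving. A resolution $\mathcal{A}$ maps each $!$-unit $!\tilde E[\vec y]$ to ''Unresolved'' or to an infinite bitstring $x$. In the latter case it is $\mathcal{A}$-resolved with $\mathcal{A}$-resolvent $\tilde E[\vec y,x]$. $E$ drives $G$ through $H$ iff $H$ is the smallest common superunit of $E,G$ and no proper $?$-superunit of $E$ is a subunit of $H$. $E$ $\mathcal{A}$-strictly drives $G$ iff, for some $H$, $E$ drives $G$ through $H$ and every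 $!$-unit that is a proper superunit of $E$ and a subunit of $H$ is $\mathcal{A}$-resolved with $E$ a subunit of its resolvent. Funits. A funit is $E[\vec w]$ with finite bitstrings $\vec w$. Addresses: $\mathbb{F}_0[\,]$ has the empty address; if $\alpha$ is the address of $E[\vec w]$, then $G_i[\vec w]$ has address $\alpha i.$ and $G[\vec w,u]$ has address $\alpha u.$. $E[\vec w]$ is a funital restriction of $E[\vec x]$ iff each $w_j$ is a prefix of $x_j$. The height of a funit is the maximal length of its bitstrings (or $0$), and it is regular iff all its bitstrings have equal length. Making the numeric move $a$ in a funit with address $\alpha$ means making the move $\alpha a$. Projections. For a run $\Theta$ and a string $\alpha$, $\Theta^\alpha$ keeps the labmoves whose move begins with $\alpha$ and deletes that prefix. $\Theta^{\preceq y}$ keeps the labmoves $\wp\,u.\beta$ with $u$ a finite prefix of $y$ and deletes ''$u.$''. The projection of $\Omega$ on $\mathbb{F}_0[\,]$ is $\Omega$; on children it is $\Theta^{i.}$ for $\wedge/\vee$-units and $\Theta^{\preceq y}$ for $!/?$-units, where $\Theta$ is the projection on the parent. The run $\Omega$. A funit is $\Phi$-active iff position $\Phi$ contains a move $\alpha\beta$ with $\alpha$ its address. A $\Phi$-prompt is a regular politeral funit whose tuple is empty or whose height is the least integer exceeding the heights of all $\Phi$-active funits. $\Omega$ is produced by a play in rounds. In each round, with $\Phi$ the position at the round's start, player $\bot$ lists the $\Phi$-prompts lexicographically and, for each in turn, makes in it the numeric move $a$, where $a$ is the least natural number not yet made as a numeric move by either player. Then the adversary $\top$ (an arbitrary HPM)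 makes at most one move. $\Omega$ is assumed legal: every move has the form $\alpha a$ with $\alpha$ the address of a politeral funit and $a$ a decimal numeral. Opposite politeral units $L,M$: $\tilde L,\tilde M$ are literals one of which is the negation of the other, and for each $\wp\in\{\top,\bot\}$ the set of $\wp$-labeled moves in the projection of $\Omega$ on $L$ equals the set of $\neg\wp$-labeled moves in the projection on $M$. Visibility. A visibility chain in $\mathcal{A}$ is a nonempty sequence $L_1,M_1,\dots,L_n,M_n$ of politeral units with each $L_i,M_i$ opposite and, for $i<n$, $M_i$ $\mathcal{A}$-strictly driving $L_{i+1}$. Its head is $L_1$ and its tail is $M_n$. A unit $E$ is visible to a unit $G$ in $\mathcal{A}$ iff either $E$ $\mathcal{A}$-strictly drives $G$, or there is a visibility chain in $\mathcal{A}$ whose head is $\mathcal{A}$-strictly driven by $E$ and whose tail $\mathcal{A}$-strictly drives $G$. *)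

From mathcomp Require Import all_boot.
From Stdlib Require Import Relations.Relation_Operators.

Set Implicit Arguments.
Unset Strict Implicit.
Unset Printing Implicit Defensive.

Inductive formula : Type :=
| Pos of nat
| Neg of nat            (* literal ~ P_n (negation on atoms only) *)
| Conj of formula & formula
| Disj of formula & formula
| Bang of formula
| Quest of formula.

(* An occurrence of a subformula of F0 (an "oformula") is given by its
   path from the root: 0 / 1 = left / right child of a binary node,
   2 = the unique child of a ! or ? node. *)
Fixpoint subf (f : formula) (p : seq nat) : option formula :=
  match p with
  | [::] => Some f
  | i :: p' =>
    match f with
    | Conj a b | Disj a b =>
        if i == 0 then subf a p' else if i == 1 then subf b p' else None
    | Bang a | Quest a => if i == 2 then subf a p' else None
    | _ => None
    end
  end.

(* modal depth = number of proper superoccurrences of the form !E or ?E *)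
Definition depth (p : seq nat) : nat := count (pred1 2) p.

Definition is_lit (o : option formula) : bool :=
  match o with Some (Pos _) | Some (Neg _) => true | _ => false end.
Definition is_bangf (o : option formula) : bool :=
  match o with Some (Bang _) => true | _ => false end.
Definition is_questf (o : option formula) : bool :=
  match o with Some (Quest _) => true | _ => false end.

(* Units E[x]: an oformula of F0 together with a tuple of infinite
   bitstrings (nat -> bool) of length the modal depth of E. *)
Record Un (F0 : formula) := MkUn {
  upath : seq nat;
  ubits : seq (nat -> bool);
  uvalid : isSome (subf F0 upath) && (size ubits == depth upath) }.

Section Units.
Variable F0 : formula.

Definition child (E G : Un F0) : Prop :=
  ((exists i, i < 2 /\ upath G = rcons (upath E) i) /\ ubits G = ubits E)
  \/ (upath G = rcons (upath E) 2 /\ exists y, ubits G = rcons (ubits E) y).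

(* E is a subunit of H (H is a superunit of E) *)
Definition subunit (E H : Un F0) : Prop := clos_refl_trans (Un F0) child H E.

Definition proper_superunit (K E : Un F0) : Prop := subunit E K /\ K <> E.

Definition origin (E : Un F0) : option formula := subf F0 (upath E).
Definition is_politeral (E : Un F0) : bool := is_lit (origin E).
Definition is_bang (E : Un F0) : bool := is_bangf (origin E).
Definition is_quest (E : Un F0) : bool := is_questf (origin E).

Definition smallest_common_superunit (E G H : Un F0) : Prop :=
  subunit E H /\ subunit G H /\
  forall H', subunit E H' -> subunit G H' -> subunit H H'.

(* A resolution: maps !-units to Unresolved (None) or a bitstring (Some x);
   its values on non-!-units are irrelevant. *)
Definition resolution := Un F0 -> option (nat -> bool).

Definition drives_through (E G H : Un F0) : Prop :=
  smallest_common_superunit E G H /\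
  forall K, is_quest K -> proper_superunit K E -> ~ subunit K H.

Definition strictly_drives (A : resolution) (E G : Un F0) : Prop :=
  exists H, drives_through E G H /\
  forall K, is_bang K -> proper_superunit K E -> subunit K H ->
    exists x, A K = Some x /\
      exists R : Un F0, upath R = rcons (upath K) 2 /\
                        ubits R = rcons (ubits K) x /\ subunit E R.

End Units.

(* Strings / moves.  A move is a string over the alphabet {'.','0',..,'9'}
   encoded as seq nat: '.' is 0 and the digit d is d.+1 (so that the
   natural order on codes is the ASCII order). *)
Definition dot : nat := 0.
Definition dig (d : nat) : nat := d.+1.
Definition bitsym (b : bool) : nat := dig (nat_of_bool b).

(* labelled moves: true = player Top, false = player Bot *)
Definition labmove := (bool * seq nat)%type.
Definition run_set := labmove -> Prop.

Fixpoint addr (p : seq nat) (ws : seq (seq bool)) : seq nat :=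
  match p with
  | [::] => [::]
  | i :: p' =>
    if i == 2 then
      match ws with
      | w :: ws' => map bitsym w ++ dot :: addr p' ws'
      | [::] => [::]
      end
    else [:: dig i; dot] ++ addr p' ws
  end.

Definition projB (i : nat) (S : run_set) : run_set :=
  fun lm => S (lm.1, [:: dig i; dot] ++ lm.2).
Definition projU (y : nat -> bool) (S : run_set) : run_set :=
  fun lm => exists k, S (lm.1, map bitsym (mkseq y k) ++ dot :: lm.2).

Fixpoint projr (p : seq nat) (xs : seq (nat -> bool)) (S : run_set) : run_set :=
  match p with
  | [::] => S
  | i :: p' =>
    if i == 2 then
      match xs with
      | y :: xs' => projr p' xs' (projU y S)
      | [::] => S
      end
    else projr p' xs (projB i S)
  end.

Definition proj (F0 : formula) (S : run_set) (E : Un F0) : run_set :=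
  projr (upath E) (ubits E) S.

Section Run.
Variable F0 : formula.

Fixpoint paths (f : formula) : seq (seq nat) :=
  [::] :: match f with
          | Conj a b | Disj a b => map (cons 0) (paths a) ++ map (cons 1) (paths b)
          | Bang a | Quest a => map (cons 2) (paths a)
          | _ => [::]
          end.

Fixpoint bits (n : nat) : seq (seq bool) :=
  if n is n'.+1 then [seq b :: w | b <- [:: false; true], w <- bits n']
  else [:: [::]].

Fixpoint tuples_of (ws : seq (seq bool)) (d : nat) : seq (seq (seq bool)) :=
  if d is d'.+1 then [seq w :: t | w <- ws, t <- tuples_of ws d']
  else [:: [::]].

Definition bits_upto (L : nat) : seq (seq bool) :=
  flatten [seq bits i | i <- iota 0 L.+1].

Definition funits_upto (L : nat) : seq (seq nat * seq (seq bool)) :=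
  [seq (p, t) | p <- paths F0, t <- tuples_of (bits_upto L) (depth p)].

Definition fheight (ws : seq (seq bool)) : nat := foldr maxn 0 (map size ws).

Definition active (Phi : seq labmove) (f : seq nat * seq (seq bool)) : bool :=
  has (fun lm => prefix (addr f.1 f.2) lm.2) Phi.

Definition maxlen (Phi : seq labmove) : nat := foldr maxn 0 [seq size lm.2 | lm <- Phi].

(* the least natural number exceeding the heights of all Phi-active funits
   (every active funit has all its bitstrings of length <= maxlen Phi) *)
Definition next_height (Phi : seq labmove) : nat :=
  let act := [seq f <- funits_upto (maxlen Phi) | active Phi f] in
  if act is [::] then 0 else (foldr maxn 0 [seq fheight f.2 | f <- act]).+1.

(* Phi-prompts: regular politeral funits whose tuple is empty or whose
   height is next_height Phi *)
Definition prompts (Phi : seq labmove) : seq (seq nat * seq (seq bool)) :=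
  let h := next_height Phi in
  [seq (p, t) | p <- [seq p <- paths F0 | is_lit (subf F0 p)],
                t <- tuples_of (bits h) (depth p)].

Fixpoint lexle (s t : seq nat) : bool :=
  match s, t with
  | [::], _ => true
  | _ :: _, [::] => false
  | a :: s', b :: t' => (a < b) || ((a == b) && lexle s' t')
  end.

Definition prompt_addrs (Phi : seq labmove) : seq (seq nat) :=
  sort lexle [seq addr f.1 f.2 | f <- prompts Phi].

(* numeric part of a move: the (nonempty, all-digit) suffix after the last dot *)
Definition numeral_value (a : seq nat) : nat := foldl (fun acc s => acc * 10 + s.-1) 0 a.
Definition is_numeral (a : seq nat) : bool := (a != [::]) && all (fun s => 0 < s <= 10) a.
Definition numeric_part (m : seq nat) : option nat :=
  let r := rev m in
  let a := rev (take (index dot r) r) in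
  if is_numeral a then Some (numeral_value a) else None.

Definition used (Phi : seq labmove) (n : nat) : bool :=
  has (fun lm => numeric_part lm.2 == Some n) Phi.

Definition fresh (Phi : seq labmove) : nat :=
  find (fun n => ~~ used Phi n) (iota 0 (size Phi).+1).

Fixpoint dec_aux (fuel n : nat) : seq nat :=
  if fuel is f.+1 then
    (if n < 10 then [:: dig n] else rcons (dec_aux f (n %/ 10)) (dig (n %% 10)))
  else [::].
Definition decimal (n : nat) : seq nat := dec_aux n.+1 n.

Definition botmoves (Phi : seq labmove) : seq labmove :=
  foldl (fun acc alpha => rcons acc (false, alpha ++ decimal (fresh (Phi ++ acc))))
        [::] (prompt_addrs Phi).

(* positions at round starts; top k is the (at most one) move of the
   adversary in round k *)
Fixpoint position (top : nat -> option (seq nat)) (k : nat) : seq labmove :=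
  if k is k'.+1 then
    let Phi := position top k' in
    let Phi' := Phi ++ botmoves Phi in
    Phi' ++ (if top k' is Some m then [:: (true, m)] else [::])
  else [::].

Definition Omega (top : nat -> option (seq nat)) : run_set :=
  fun lm => exists k, lm \in position top k.

Definition legal (S : run_set) : Prop :=
  forall lm, S lm -> exists (p : seq nat) (ws : seq (seq bool)) (a : seq nat),
    [/\ is_lit (subf F0 p), size ws = depth p, is_numeral a &
        lm.2 = addr p ws ++ a].

End Run.

Section Visibility.
Variable F0 : formula.
Variable Om : run_set.
Variable A : resolution F0.

Definition complementary (o1 o2 : option formula) : bool :=
  match o1, o2 with
  | Some (Pos a), Some (Neg b) | Some (Neg a), Some (Pos b) => a == b
  | _, _ => false
  end.

Definition opposite (L M : Un F0) : Prop :=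
  complementary (origin L) (origin M) /\
  forall (b : bool) (m : seq nat), proj Om L (b, m) <-> proj Om M (~~ b, m).

(* visibility chain L1,M1,...,Ln,Mn given as the list of pairs (Li,Mi) *)
Fixpoint chain (c : list (Un F0 * Un F0)) : Prop :=
  match c with
  | [::] => True
  | [:: (L, M)] => opposite L M
  | (L, M) :: ((L', _) :: _) as rest =>
      opposite L M /\ strictly_drives A M L' /\ chain rest
  end.

Definition visible (E G : Un F0) : Prop :=
  strictly_drives A E G \/
  exists (L1 M1 : Un F0) (rest : list (Un F0 * Un F0)),
    chain ((L1, M1) :: rest) /\
    strictly_drives A E L1 /\
    strictly_drives A (last (L1, M1) rest).2 G.

End Visibility.

Definition countable (T : Type) (P : T -> Prop) : Prop :=
  exists f : nat -> T, forall x, P x -> exists n, f n = x.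

From mathcomp Require Import all_boot.
From Stdlib Require Import FunctionalExtensionality ClassicalEpsilon Classical.
From Stdlib Require Import Relations.Relation_Operators.

Set Implicit Arguments.
Unset Strict Implicit.
Unset Printing Implicit Defensive.

(* A unit visible to G strictly drives G, or strictly drives the head L1 of a
   visibility chain L1,M1,...,Ln,Mn whose tail strictly drives G.  Since
   countable unions of countable sets are countable, it suffices to show:

   (1) for every unit X, the units strictly driving X form a countable set.
       The unit H through which E drives X is a superunit of X, hence is
       determined by its path (countably many choices); given H, the driving
       unit E is determined by its path, because each bitstring of E below H
       is the resolvent chosen at a !-superunit of E (no ?-superunit of E may
       lie below H).
   (2) every unit M has at most one opposite unit.  This is where the run
       Omega matters: a politeral unit is determined by the projection of
       Omega on it, because Bot answers every prompt with a numeral never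
       used before, and the prompt heights grow without bound, so the
       projection reveals arbitrarily long prefixes of the unit's bitstrings.

   Then heads of chains of each length form a countable set by induction on
   the length, and the theorem follows. *)

Section Countability.
Variables (T : Type) (x0 : T).

Lemma countable_inj (K : countType) (P : T -> Prop) (key : T -> K) :
  (forall x y, P x -> P y -> key x = key y -> x = y) -> countable P.
Proof.
move=> key_inj.
pose pre (k : K) := epsilon (inhabits x0) (fun x => P x /\ key x = k).
exists (fun n => if unpickle n is Some k then pre k else x0) => x Px.
exists (pickle (key x)); rewrite pickleK.
have [Ppre key_pre] := epsilon_spec (inhabits x0) (fun y => P y /\ key y = key x)
  (ex_intro _ x (conj Px erefl)).
exact: key_inj.
Qed.

Lemma countable_sub (P Q : T -> Prop) :
  (forall x, P x -> Q x) -> countable Q -> countable P.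
Proof. by move=> PQ [f f_onto]; exists f => x /PQ /f_onto. Qed.

Lemma countable_or (P Q : T -> Prop) :
  countable P -> countable Q -> countable (fun x => P x \/ Q x).
Proof.
move=> [f f_onto] [g g_onto].
exists (fun n => if odd n then g n./2 else f n./2).
move=> x [/f_onto [n <-]|/g_onto [n <-]].
  by exists n.*2; rewrite odd_double doubleK.
by exists n.*2.+1; rewrite /= odd_double /= uphalf_double.
Qed.

Lemma countable_bind (U : Type) (P : U -> Prop) (Q : U -> T -> Prop) :
  countable P -> (forall u, P u -> countable (Q u)) ->
  countable (fun x => exists u, P u /\ Q u x).
Proof.
move=> [f f_onto] countQ.
pose enum_of u := epsilon (inhabits (fun _ : nat => x0))
  (fun h => P u -> forall x, Q u x -> exists m, h m = x).
have enum_ofP u : P u -> forall x, Q u x -> exists m, enum_of u m = x.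
  apply: (epsilon_spec (inhabits (fun _ : nat => x0))
    (fun h => P u -> forall x, Q u x -> exists m, h m = x)).
  have [Pu|nPu] := classic (P u); last by exists (fun _ => x0).
  by have [h h_onto] := countQ u Pu; exists h.
exists (fun n => let ab := odflt (0, 0) (unpickle n) in enum_of (f ab.1) ab.2).
move=> x [u [Pu Qux]].
have [a fa] := f_onto u Pu; have [b eb] := enum_ofP u Pu x Qux.
by exists (pickle (a, b)); rewrite pickleK /= fa.
Qed.

End Countability.

Section SeqFacts.
Variable T : Type.

Lemma catIl (a s t : seq T) : a ++ s = a ++ t -> s = t.
Proof. by elim: a => [|x a IH] //= [] /IH. Qed.

Lemma catIr (s1 s2 t : seq T) : s1 ++ t = s2 ++ t -> s1 = s2.
Proof.
move=> E; have size12 : size s1 = size s2.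
  by move/(congr1 size)/eqP: E; rewrite !size_cat eqn_add2r => /eqP.
by rewrite -(take_size_cat t (erefl (size s1))) E take_size_cat.
Qed.

Lemma prefix_cases (a b x y : seq T) :
  a ++ x = b ++ y -> size a <= size b -> exists z, b = a ++ z.
Proof.
move=> E ab; exists (drop (size a) b).
move/(congr1 (take (size a))): E; rewrite take_size_cat // takel_cat // => Ea.
by rewrite -{1}(cat_take_drop (size a) b) -Ea.
Qed.

Lemma prefix_same_size (a b s t : seq T) :
  a ++ s = b ++ t -> size a = size b -> a = b.
Proof.
by move=> /(congr1 (take (size a))) + ab; rewrite take_size_cat // ab take_size_cat.
Qed.

End SeqFacts.

Definition is_modal (f : formula) : bool :=
  match f with Bang _ | Quest _ => true | _ => false end.

Definition childf (f : formula) (i : nat) : formula :=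
  match f with
  | Conj a b | Disj a b => if i == 0 then a else b
  | Bang a | Quest a => a
  | _ => f
  end.

Lemma subf_cons f i p : subf f (i :: p) <> None ->
  subf f (i :: p) = subf (childf f i) p /\ (i == 2) = is_modal f.
Proof.
case: f => [a|a|a b|a b|a|a] //=; try by case: i => [|[|i]].
all: by case: (eqVneq i 2).
Qed.

Lemma subf_cat f p q : subf f (p ++ q) = obind (fun g => subf g q) (subf f p).
Proof.
elim: p f => [|i p IH] [a|a|a b|a b|a|a] //=; by do ?case: ifP => _; rewrite ?IH.
Qed.

Lemma subf_binary_step f i p : subf f (i :: p) <> None -> i != 2 -> i < 2.
Proof. by case: i => [|[|[|i]]] //; case: f. Qed.

Lemma depth_cat p q : depth (p ++ q) = depth p + depth q.
Proof. by rewrite /depth count_cat. Qed.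

Lemma depth_rcons p i : depth (rcons p i) = depth p + (i == 2).
Proof. by rewrite -cats1 depth_cat /depth /= addn0 eq_sym. Qed.

Lemma split_depth q j : j < depth q -> exists r s, q = r ++ 2 :: s /\ depth r = j.
Proof.
elim: q j => [|a q IH] j //; rewrite /depth /=.
case: (eqVneq a 2) => [->|a2] /=; last first.
  rewrite add0n => /IH [r [s [-> dr]]]; exists (a :: r), s.
  by rewrite /depth /= (negbTE a2).
case: j => [|j] jq; first by exists [::], q.
have [r [s [-> dr]]] := IH j jq; exists (2 :: r), s.
by move: dr; rewrite /depth /= => ->.
Qed.

Section Units.
Variable F0 : formula.
Implicit Types E H K X : Un F0.

Lemma unit_eq E E' : upath E = upath E' -> ubits E = ubits E' -> E = E'.
Proof.
case: E E' => p b h [p' b' h'] /= pp' bb'; subst.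
by rewrite (bool_irrelevance h h').
Qed.

Lemma unit_path_valid E : subf F0 (upath E) <> None.
Proof. by case: E => p b /= /andP []; case: (subf F0 p). Qed.

Lemma unit_bits_size E : size (ubits E) = depth (upath E).
Proof. by case: E => p b /= /andP [_ /eqP]. Qed.

Lemma subunit_prefixes E H : subunit E H ->
  (exists s, upath E = upath H ++ s) /\ (exists t, ubits E = ubits H ++ t).
Proof.
elim => [x y [[[i [_ ->]] ->]|[-> [b ->]]]|x|x y z _ [[s1 E1] [t1 F1]] _ [[s2 E2] [t2 F2]]].
- by split; [exists [:: i]; rewrite cats1|exists [::]; rewrite cats0].
- by split; [exists [:: 2]|exists [:: b]]; rewrite cats1.
- by split; exists [::]; rewrite cats0.
- by split; [exists (s1 ++ s2); rewrite E2 E1 catA|exists (t1 ++ t2); rewrite F2 F1 catA].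
Qed.

Lemma prefixes_subunit E K : (exists s, upath E = upath K ++ s) ->
  (exists t, ubits E = ubits K ++ t) -> subunit E K.
Proof.
move=> [s]; elim: s K => [|i s IH] K Es [t Et].
  have t0 : t = [::].
    apply/size0nil; move: (@unit_bits_size E).
    rewrite Et Es cats0 size_cat unit_bits_size => /eqP.
    by rewrite -{2}[depth _]addn0 eqn_add2l => /eqP.
  by rewrite (@unit_eq E K) ?Es ?Et ?t0 ?cats0; first exact: rt_refl.
have size_t : size t = depth (i :: s).
  move: (@unit_bits_size E); rewrite Et Es !size_cat depth_cat unit_bits_size.
  by move/eqP; rewrite eqn_add2l => /eqP.
have stepOK : subf F0 (rcons (upath K) i) <> None.
  move: (@unit_path_valid E); rewrite Es -cat_rcons subf_cat.
  by case: (subf F0 (rcons (upath K) i)).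
pose y := head (fun _ => false) t.
pose b1 := if i == 2 then rcons (ubits K) y else ubits K.
have valid1 : isSome (subf F0 (rcons (upath K) i)) && (size b1 == depth (rcons (upath K) i)).
  rewrite depth_rcons -unit_bits_size /b1.
  by case: (i == 2); rewrite ?size_rcons ?addn1 ?addn0 eqxx andbT; case: (subf F0 _) stepOK.
pose K1 := MkUn valid1.
have childK1 : child K K1.
  rewrite /child /K1 /= /b1; case: (eqVneq i 2) => [->|i2]; first by right; split => //; exists y.
  left; split => //; exists i; split => //.
  move: stepOK; rewrite -cats1 subf_cat; case: (subf F0 (upath K)) => [g|] //= g_i.
  exact: subf_binary_step g_i i2.
apply: rt_trans (rt_step _ _ _ _ childK1) _; apply: IH => /=; first by rewrite cat_rcons.
exists (if i == 2 then behead t else t); rewrite Et /b1.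
case: (eqVneq i 2) size_t => [->|_] // size_t; rewrite cat_rcons /y.
by case: t {Et b1 valid1 K1 childK1 y} size_t.
Qed.

Lemma superunit_path_inj X H H' :
  subunit X H -> subunit X H' -> upath H = upath H' -> H = H'.
Proof.
move=> /subunit_prefixes [_ [t Ht]] /subunit_prefixes [_ [t' Ht']] pathHH'.
apply: unit_eq => //; apply: (prefix_same_size (s := t) (t := t')); first by rewrite -Ht -Ht'.
by rewrite !unit_bits_size pathHH'.
Qed.

End Units.

Section Driving.
Variable F0 : formula.
Variable A : resolution F0.
Implicit Types E H K R X : Un F0.

(* The conditions that strict driving through H imposes on the driving unit E
   alone: E lies below H, no proper ?-superunit of E lies below H, and every
   proper !-superunit of E below H is resolved towards E. *)
Definition driven_below H E : Prop :=
  [/\ subunit E H,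
      forall K, is_quest K -> proper_superunit K E -> ~ subunit K H &
      forall K, is_bang K -> proper_superunit K E -> subunit K H ->
        exists x, A K = Some x /\
          exists R, [/\ upath R = rcons (upath K) 2, ubits R = rcons (ubits K) x
                      & subunit E R]].

Lemma strictly_drives_below E X :
  strictly_drives A E X -> exists H, subunit X H /\ driven_below H E.
Proof.
move=> [H [[[EH [XH _]] noquest] resolved]]; exists H; split => //; split => //.
move=> K bangK KE KH; have [x [AK [R [? [? ?]]]]] := resolved K bangK KE KH.
by exists x; split => //; exists R.
Qed.

Lemma modal_superunit E j : j < size (ubits E) ->
  exists K, [/\ exists s, upath E = upath K ++ 2 :: s,
                ubits K = take j (ubits E) & is_bang K || is_quest K].
Proof.
move=> jE; have [r [s [pathE dr]]] : exists r s, upath E = r ++ 2 :: s /\ depth r = j.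
  by apply: split_depth; rewrite -unit_bits_size.
have valid_r : subf F0 r <> None.
  by move: (@unit_path_valid _ E); rewrite pathE subf_cat; case: (subf F0 r).
have validK : isSome (subf F0 r) && (size (take j (ubits E)) == depth r).
  by rewrite size_take jE dr eqxx andbT; case: (subf F0 r) valid_r.
exists (MkUn validK); split => //=; first by exists s.
have := @unit_path_valid _ E; rewrite pathE subf_cat /is_bang /is_quest /origin /=.
case: (subf F0 r) => [g|] //= /subf_cons [_ /esym].
by case: g.
Qed.

Lemma proper_superunit_of_prefix E K s t :
  upath E = upath K ++ 2 :: s -> ubits E = ubits K ++ t -> proper_superunit K E.
Proof.
move=> pathE bitsE; split; first by apply: prefixes_subunit; [exists (2 :: s)|exists t].
move=> KE; move/(congr1 size): pathE; rewrite KE size_cat /= => /eqP.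
by rewrite -{1}[size _]addn0 eqn_add2l.
Qed.

Lemma modal_superunit_below E H K s :
  subunit E H -> upath E = upath K ++ 2 :: s ->
  ubits K = take (size (ubits K)) (ubits E) -> size (ubits H) <= size (ubits K) ->
  subunit K H.
Proof.
move=> /subunit_prefixes [[s0 pathEH] [t0 bitsEH]] pathE bitsK sizeHK.
apply: prefixes_subunit.
  have E1 : upath H ++ s0 = upath K ++ 2 :: s by rewrite -pathEH -pathE.
  have [le_HK|lt_KH] := leqP (size (upath H)) (size (upath K)).
    exact: prefix_cases E1 le_HK.
  have [[|a z] pathH] := prefix_cases (esym E1) (ltnW lt_KH).
    by move: lt_KH; rewrite pathH cats0 ltnn.
  move: E1; rewrite pathH -catA => /catIl [a2 _]; subst a.
  move: sizeHK; rewrite !unit_bits_size pathH depth_cat /depth /= add1n addnS.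
  by rewrite ltnNge leq_addr.
exists (take (size (ubits K) - size (ubits H)) t0).
by rewrite [LHS]bitsK bitsEH take_cat ltnNge sizeHK.
Qed.

Lemma resolvent_bit E K R x :
  upath R = rcons (upath K) 2 -> ubits R = rcons (ubits K) x -> subunit E R ->
  nth (fun _ => false) (ubits E) (size (ubits K)) = x.
Proof.
move=> _ bitsR /subunit_prefixes [_ [t ->]].
by rewrite bitsR nth_cat size_rcons ltnSn nth_rcons ltnn eqxx.
Qed.

(* Key uniqueness: below a fixed H, a unit satisfying the strict-driving
   conditions is determined by its path.  Bitstrings beyond H's are forced,
   one modal step at a time, by the resolution. *)
Lemma driven_below_path_inj H E E' :
  driven_below H E -> driven_below H E' -> upath E = upath E' -> E = E'.
Proof.
move=> [EH noquest resolved] [E'H noquest' resolved'] pathEE'.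
apply: unit_eq => //.
have size_bits : size (ubits E) = size (ubits E') by rewrite !unit_bits_size pathEE'.
apply: (eq_from_nth (x0 := fun _ => false)) => // j.
elim/ltn_ind: j => j IH jE.
have [[_ [t bitsE]] [_ [t' bitsE']]] := (subunit_prefixes EH, subunit_prefixes E'H).
have [jH|Hj] := ltnP j (size (ubits H)); first by rewrite bitsE bitsE' !nth_cat jH.
have take_j : take j (ubits E') = take j (ubits E).
  apply: (eq_from_nth (x0 := fun _ => false)); first by rewrite !size_take size_bits.
  move=> i; rewrite size_take -size_bits jE => ij.
  by rewrite !nth_take // IH // (ltn_trans ij jE).
have [K [[s pathE] bitsK modalK]] := modal_superunit jE.
have sizeK : size (ubits K) = j by rewrite bitsK size_take jE.
have KE : proper_superunit K E.
  apply: (proper_superunit_of_prefix (t := drop j (ubits E))) pathE _.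
  by rewrite bitsK cat_take_drop.
have KE' : proper_superunit K E'.
  apply: (proper_superunit_of_prefix (t := drop j (ubits E'))); first by rewrite -pathEE' pathE.
  by rewrite bitsK -take_j cat_take_drop.
have KH : subunit K H.
  by apply: (modal_superunit_below EH pathE); rewrite sizeK.
case/orP: modalK => [bangK|questK]; last by case: (noquest K questK KE KH).
have [x [AKx [R [pathR bitsR ER]]]] := resolved K bangK KE KH.
have [x' [AKx' [R' [pathR' bitsR' E'R']]]] := resolved' K bangK KE' KH.
rewrite -sizeK (resolvent_bit pathR bitsR ER) (resolvent_bit pathR' bitsR' E'R').
by move: AKx'; rewrite AKx => -[].
Qed.

End Driving.

Lemma numeral_value_rcons s d : numeral_value (rcons s d) = numeral_value s * 10 + d.-1.
Proof. by rewrite /numeral_value foldl_rcons. Qed.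

Lemma dec_aux_numeral f n : n < f ->
  [/\ dec_aux f n != [::], all (fun s => 0 < s <= 10) (dec_aux f n) &
      numeral_value (dec_aux f n) = n].
Proof.
elim: f n => [|f IH] n //= nf; case: ifP => n10; first by rewrite /dig /numeral_value /= n10.
have [|_ digits value] := IH (n %/ 10).
  by rewrite -ltnS (leq_trans _ nf) // ltnS ltn_Pdiv //; case: (n) n10.
split; first by case: (dec_aux _ _).
  by rewrite all_rcons digits andbT /dig /= ltnS -ltnS ltn_mod.
by rewrite numeral_value_rcons value /dig /= -divn_eq.
Qed.

Lemma decimal_numeral n :
  [/\ decimal n != [::], all (fun s => 0 < s <= 10) (decimal n) &
      numeral_value (decimal n) = n].
Proof. exact: dec_aux_numeral. Qed.

(* Addresses are empty or end with a dot, so the numeric part of a move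
   "address followed by a numeral" is that numeral. *)
Definition address_like (a : seq nat) : Prop := a = [::] \/ exists s, a = rcons s dot.

Lemma addr_address_like p ws : address_like (addr p ws).
Proof.
elim: p ws => [|i p IH] ws /=; first by left.
case: ifP => _; last first.
  right; case: (IH ws) => [->|[s ->]]; first by exists [:: dig i].
  by exists ([:: dig i; dot] ++ s); rewrite rcons_cat.
case: ws => [|w ws]; first by left.
right; case: (IH ws) => [->|[s ->]]; first by exists (map bitsym w); rewrite cats1.
by exists (map bitsym w ++ dot :: s); rewrite rcons_cat.
Qed.

Lemma numeric_part_decimal a n : address_like a -> numeric_part (a ++ decimal n) = Some n.
Proof.
move=> a_like; have [nonempty digits value] := decimal_numeral n.
have no_dot : dot \notin rev (decimal n).
  by rewrite mem_rev; apply/negP => /(allP digits).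
rewrite /numeric_part rev_cat.
have -> : index dot (rev (decimal n) ++ rev a) = size (rev (decimal n)).
  rewrite index_cat (negbTE no_dot).
  by case: a_like => [->|[s ->]]; rewrite ?rev_rcons /= addn0.
by rewrite take_size_cat // revK /is_numeral nonempty digits value.
Qed.

(* [fresh Phi] is indeed a numeral not yet used in Phi: by pigeonhole, the
   (size Phi).+1 candidates cannot all be used by the moves of Phi. *)
Lemma fresh_unused Phi : ~~ used Phi (fresh Phi).
Proof.
rewrite /fresh; set unused := (fun n => ~~ used Phi n).
have : has unused (iota 0 (size Phi).+1).
  apply/negPn/negP => /hasPn all_used.
  have sub_used : {subset [seq Some n | n <- iota 0 (size Phi).+1] <=
                          [seq numeric_part lm.2 | lm <- Phi]}.
    move=> o /mapP [n n_in ->]; have := all_used n n_in; rewrite /unused negbK.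
    by case/hasP => lm lm_in /eqP <-; apply: map_f.
  have uniq_cand : uniq [seq Some n | n <- iota 0 (size Phi).+1].
    by rewrite map_inj_uniq ?iota_uniq // => x y [].
  by have := uniq_leq_size uniq_cand sub_used; rewrite !size_map size_iota ltnn.
move=> has_unused; have := nth_find 0 has_unused.
by rewrite nth_iota ?add0n // -[X in _ < X](size_iota 0) -has_find.
Qed.

Definition bot_numerals_fresh (s : seq labmove) : Prop :=
  forall j, j < size s -> (nth (true, [::]) s j).1 = false ->
  exists n, numeric_part (nth (true, [::]) s j).2 = Some n /\ ~~ used (take j s) n.

Lemma bot_numerals_fresh_rcons s x : bot_numerals_fresh s ->
  (x.1 = false -> exists n, numeric_part x.2 = Some n /\ ~~ used s n) ->
  bot_numerals_fresh (rcons s x).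
Proof.
move=> fresh_s fresh_x j; rewrite size_rcons ltnS leq_eqVlt => /orP [/eqP ->|js].
  by rewrite nth_rcons ltnn eqxx -cats1 take_size_cat.
rewrite nth_rcons js -cats1 takel_cat; [exact: fresh_s | exact: ltnW].
Qed.

Lemma bot_numerals_fresh_inj s a b : bot_numerals_fresh s ->
  a \in s -> b \in s -> a.1 = false -> b.1 = false ->
  numeric_part a.2 = numeric_part b.2 -> a = b.
Proof.
move=> fresh_s.
wlog le_ab : a b / index a s <= index b s.
  move=> W a_in b_in a1 b1 ab; have [le_ab|lt_ba] := leqP (index a s) (index b s); first exact: W.
  by apply/esym/W => //; apply: ltnW.
move=> a_in b_in a1 b1 ab; move: le_ab; rewrite leq_eqVlt => /orP [/eqP eq_ab|lt_ab].
  by rewrite -(nth_index (true, [::]) a_in) eq_ab nth_index.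
have b_lt : index b s < size s by rewrite index_mem.
have [|n [b_n unused_n]] := fresh_s _ b_lt; first by rewrite nth_index.
case/negP: unused_n; apply/hasP; exists a; last by rewrite ab -b_n nth_index.
rewrite -(nth_index (true, [::]) a_in) -(nth_take (true, [::]) lt_ab).
by rewrite mem_nth // size_take b_lt.
Qed.

Lemma botmoves_fold Phi alphas acc :
  bot_numerals_fresh (Phi ++ acc) -> (forall a, a \in alphas -> address_like a) ->
  let r := foldl (fun acc alpha => rcons acc (false, alpha ++ decimal (fresh (Phi ++ acc))))
                 acc alphas in
  [/\ bot_numerals_fresh (Phi ++ r),
      forall a, a \in alphas -> exists n, (false, a ++ decimal n) \in r &
      forall x, x \in acc -> x \in r].
Proof.
elim: alphas acc => [|a al IH] acc fresh_acc like_al //=.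
set acc' := rcons acc _.
have fresh_acc' : bot_numerals_fresh (Phi ++ acc').
  rewrite /acc' -rcons_cat; apply: bot_numerals_fresh_rcons => // _ /=.
  exists (fresh (Phi ++ acc)); rewrite fresh_unused numeric_part_decimal //.
  by apply: like_al; rewrite mem_head.
have [|fresh_r answered kept] := IH acc' fresh_acc'.
  by move=> b b_in; apply: like_al; rewrite inE b_in orbT.
split => // [b|x x_in]; last by apply: kept; rewrite mem_rcons inE x_in orbT.
rewrite inE => /orP [/eqP ->|]; last exact: answered.
by exists (fresh (Phi ++ acc)); apply: kept; rewrite mem_rcons mem_head.
Qed.

Lemma botmoves_spec F0 Phi : bot_numerals_fresh Phi ->
  [/\ bot_numerals_fresh (Phi ++ botmoves F0 Phi) &
      forall a, a \in prompt_addrs F0 Phi ->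
        exists n, (false, a ++ decimal n) \in botmoves F0 Phi].
Proof.
move=> fresh_Phi; have [||fresh_r answered _] := @botmoves_fold Phi (prompt_addrs F0 Phi) [::].
- by rewrite cats0.
- by move=> a; rewrite mem_sort => /mapP [f _ ->]; apply: addr_address_like.
- by [].
Qed.

Section Play.
Variable F0 : formula.
Variable top : nat -> option (seq nat).
Notation pos := (position F0 top).

Lemma position_fresh k : bot_numerals_fresh (pos k).
Proof.
elim: k => [|k IH] /=; first by [].
have [fresh_k _] := botmoves_spec F0 IH.
case: (top k) => [m|]; last by rewrite cats0.
by rewrite cats1; apply: bot_numerals_fresh_rcons.
Qed.

Lemma position_mono k K x : k <= K -> x \in pos k -> x \in pos K.
Proof.
elim: K => [|K IH]; first by rewrite leqn0 => /eqP ->.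
rewrite leq_eqVlt => /orP [/eqP ->//|]; rewrite ltnS => kK x_in /=.
by rewrite !mem_cat IH.
Qed.

Lemma Omega_bot_numeral_inj a b : Omega F0 top a -> Omega F0 top b ->
  a.1 = false -> b.1 = false -> numeric_part a.2 = numeric_part b.2 -> a = b.
Proof.
move=> [k1 a_in] [k2 b_in].
apply: (@bot_numerals_fresh_inj (pos (maxn k1 k2))); first exact: position_fresh.
- by apply: position_mono a_in; rewrite leq_maxl.
- by apply: position_mono b_in; rewrite leq_maxr.
Qed.

Lemma prompt_answered k a : a \in prompt_addrs F0 (pos k) ->
  exists n, (false, a ++ decimal n) \in pos k.+1.
Proof.
move=> a_prompt; have [_ /(_ _ a_prompt) [n n_in]] := botmoves_spec F0 (@position_fresh k).
by exists n => /=; rewrite !mem_cat n_in orbT.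
Qed.

End Play.

Lemma mem_bits w : w \in bits (size w).
Proof. by elim: w => [|b w IH] //; apply/allpairsP; exists (b, w); case: b. Qed.

Lemma mem_tuples ws t : {subset t <= ws} -> t \in tuples_of ws (size t).
Proof.
elim: t => [|w t IH] t_ws; first by rewrite inE.
apply/allpairsP; exists (w, t); split => //; first by apply: t_ws; rewrite mem_head.
by apply: IH => x x_in; apply: t_ws; rewrite inE x_in orbT.
Qed.

Lemma mem_bits_upto L w : size w <= L -> w \in bits_upto L.
Proof.
move=> wL; apply/flatten_mapP; exists (size w); last exact: mem_bits.
by rewrite mem_iota add0n ltnS.
Qed.

Lemma subf_paths f p : subf f p <> None -> p \in paths f.
Proof.
elim: p f => [|i p IH] [a|a|a b|a b|a|a]; rewrite /= ?inE //.
all: do ?case: ifP => [/eqP -> /IH p_in|_]; rewrite ?mem_cat ?map_f ?orbT //.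
Qed.

Lemma foldr_maxn_ge x s : x \in s -> x <= foldr maxn 0 s.
Proof.
elim: s => [|y s IH] //=; rewrite inE => /orP [/eqP ->|/IH]; first exact: leq_maxl.
by move/leq_trans; apply; apply: leq_maxr.
Qed.

Lemma foldr_maxn_le h s : (forall x, x \in s -> x <= h) -> foldr maxn 0 s <= h.
Proof.
elim: s => [|y s IH] //= le_h; rewrite geq_max le_h ?mem_head // IH // => x x_in.
by apply: le_h; rewrite inE x_in orbT.
Qed.

Lemma addr_size p ws w : w \in ws -> size ws = depth p -> size w <= size (addr p ws).
Proof.
elim: p ws => [|i p IH] ws; first by case: ws.
rewrite /depth; case: (eqVneq i 2) => [->|i2] /=.
  case: ws => [|v ws] //; rewrite inE => /orP [/eqP ->|w_in] [size_ws].
    by rewrite size_cat size_map leq_addr.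
  by rewrite size_cat /= addnS ltnW // ltnS (leq_trans (IH _ w_in size_ws)) // leq_addl.
rewrite (negbTE i2) add0n => w_in size_ws /=.
by apply: leq_trans (IH _ w_in size_ws) _; rewrite -addn2 leq_addr.
Qed.

Lemma maxlen_ge Phi lm : lm \in Phi -> size lm.2 <= maxlen Phi.
Proof. by move=> lm_in; apply: foldr_maxn_ge; apply: map_f. Qed.

Lemma prompt_addrs_mem F0 Phi p t : is_lit (subf F0 p) -> size t = depth p ->
  (forall w, w \in t -> size w = next_height F0 Phi) -> addr p t \in prompt_addrs F0 Phi.
Proof.
move=> lit_p size_t height_t; rewrite /prompt_addrs mem_sort.
apply/mapP; exists (p, t) => //; apply/allpairsPdep; exists p, t; split => //.
  by rewrite mem_filter lit_p /= subf_paths //; case: (subf F0 p) lit_p.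
by rewrite -size_t mem_tuples // => w w_in; rewrite -(height_t _ w_in) mem_bits.
Qed.

Lemma next_height_gt F0 Phi p t : t \in tuples_of (bits_upto (maxlen Phi)) (depth p) ->
  p \in paths F0 -> active Phi (p, t) -> fheight t < next_height F0 Phi.
Proof.
move=> t_in p_in act; rewrite /next_height.
have f_in : (p, t) \in [seq f <- funits_upto F0 (maxlen Phi) | active Phi f].
  by rewrite mem_filter act /=; apply/allpairsPdep; exists p, t.
case: [seq _ <- _ | _] f_in => [|f0 s] // f_in.
by rewrite ltnS; apply: foldr_maxn_ge; apply: (map_f (fun f => fheight f.2) f_in).
Qed.

(* If F0 has a politeral oformula of positive modal depth, the heights of the
   prompts grow strictly from round to round: the prompt of that oformula at
   the current height is answered, hence active at the next round. *)
Section Growth.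
Variable F0 : formula.
Variable top : nat -> option (seq nat).
Notation pos := (position F0 top).
Variable p0 : seq nat.
Hypothesis lit_p0 : is_lit (subf F0 p0).
Hypothesis modal_p0 : 0 < depth p0.

Lemma next_height_increasing k : next_height F0 (pos k) < next_height F0 (pos k.+1).
Proof.
set h := next_height F0 (pos k); set t := nseq (depth p0) (nseq h false).
have size_t : size t = depth p0 by rewrite size_nseq.
have height_t w : w \in t -> size w = h by move=> /nseqP [-> _]; rewrite size_nseq.
have [n answered] := prompt_answered (prompt_addrs_mem lit_p0 size_t height_t).
have w_in : nseq h false \in t by rewrite mem_nseq modal_p0 eqxx.
have -> : h = fheight t.
  apply/eqP; rewrite eqn_leq foldr_maxn_le ?andbT => [|x /mapP [w /height_t -> ->]] //.
  by apply: foldr_maxn_ge; rewrite -(height_t _ w_in) map_f.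
apply: (next_height_gt (p := p0)).
- rewrite -size_t; apply: mem_tuples => w /height_t size_w; apply: mem_bits_upto.
  rewrite size_w; apply: leq_trans (maxlen_ge answered) => /=.
  rewrite size_cat; apply: leq_trans (leq_addr _ _).
  by have := addr_size w_in size_t; rewrite size_nseq.
- by apply: subf_paths; case: (subf F0 p0) lit_p0.
- by apply/hasP; exists (false, addr p0 t ++ decimal n) => //; apply: prefix_prefix.
Qed.

Lemma height_unbounded N : exists k, N <= next_height F0 (pos k).
Proof.
exists N; elim: N => [|N IH] //; exact: leq_ltn_trans IH (next_height_increasing N).
Qed.

End Growth.

(* [prefix_tuple xs ws]: the finite bitstrings ws are prefixes of the
   corresponding infinite bitstrings xs, i.e. E[ws] is a funital restriction
   of E[xs]. *)
Fixpoint prefix_tuple (xs : seq (nat -> bool)) (ws : seq (seq bool)) : Prop :=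
  match xs, ws with
  | [::], [::] => True
  | y :: xs', w :: ws' => w = mkseq y (size w) /\ prefix_tuple xs' ws'
  | _, _ => False
  end.

Lemma prefix_tuple_size xs ws : prefix_tuple xs ws -> size ws = size xs.
Proof. by elim: xs ws => [|y xs IH] [|w ws] //= [_ /IH ->]. Qed.

Lemma prefix_tuple_mkseq h xs : prefix_tuple xs (map (fun y => mkseq y h) xs).
Proof. by elim: xs => [|y xs IH] //=; rewrite size_mkseq. Qed.

Lemma size_map_mkseq h (xs : seq (nat -> bool)) w :
  w \in map (fun y => mkseq y h) xs -> size w = h.
Proof.
elim: xs => [|y xs IH] //=; rewrite inE => /orP [/eqP ->|/IH //].
by rewrite size_mkseq.
Qed.

Lemma prefix_tuple_bits h xs' xs : prefix_tuple xs' (map (fun y => mkseq y h) xs) ->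
  forall j i, i < h -> nth (fun _ => false) xs' j i = nth (fun _ => false) xs j i.
Proof.
elim: xs' xs => [|y' xs' IH] [|y xs] //= [y'y pre] [|j] i ih /=; last exact: IH.
by move/(congr1 (fun s => nth false s i)): y'y; rewrite size_mkseq !nth_mkseq.
Qed.

Lemma projr_intro p xs ws (S : run_set) b m : size xs = depth p -> prefix_tuple xs ws ->
  S (b, addr p ws ++ m) -> projr p xs S (b, m).
Proof.
elim: p xs ws S => [|i p IH] xs ws S; first by case: xs; case: ws.
rewrite /depth; case: (eqVneq i 2) => [->|i2] /=; last first.
  by rewrite (negbTE i2) add0n => size_xs pre S_m; apply: (IH _ ws).
case: xs => [|y xs] //; case: ws => [|w ws] //= [size_xs] [w_y pre] S_m.
by apply: (IH _ ws) => //; exists (size w); rewrite -w_y /= -cat_cons catA.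
Qed.

Lemma projr_elim p xs (S : run_set) b m : size xs = depth p ->
  projr p xs S (b, m) -> exists ws, prefix_tuple xs ws /\ S (b, addr p ws ++ m).
Proof.
elim: p xs S m => [|i p IH] xs S m; first by case: xs => // _ S_m; exists [::].
rewrite /depth; case: (eqVneq i 2) => [->|i2] /=; last first.
  rewrite (negbTE i2) add0n => size_xs /(IH _ _ _ size_xs) [ws [pre S_m]].
  by exists ws; split => //; rewrite catA.
case: xs => [|y xs] //= [size_xs] /(IH _ _ _ size_xs) [ws [pre [k S_m]]].
exists (mkseq y k :: ws); split; first by rewrite /= size_mkseq.
by rewrite /= -catA.
Qed.

(* Addresses of funits are injective: an encoded bitstring extends up to the
   next dot, and only the root funit has the empty address. *)
Lemma split_dot w v x y :
  map bitsym w ++ dot :: x = map bitsym v ++ dot :: y -> w = v /\ x = y.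
Proof.
elim: w v => [|b w IH] [|c v] /=; [by case=> -> | by case: c | by case: b |].
by case=> bc /IH [-> ->]; case: b c bc => [] [].
Qed.

Lemma addr_nil p ws : size ws = depth p -> addr p ws = [::] -> p = [::].
Proof.
case: p => [|i p] //; rewrite /depth /=; case: (eqVneq i 2) => [->|i2] //=.
by case: ws => // w ws _; case: w.
Qed.

Lemma addr_inj f p q ws vs : subf f p <> None -> subf f q <> None ->
  size ws = depth p -> size vs = depth q -> addr p ws = addr q vs -> p = q /\ ws = vs.
Proof.
elim: p f q ws vs => [|i p IH] f q ws vs valid_p valid_q size_ws size_vs.
  move=> /esym /(addr_nil size_vs) q0; subst q.
  by move: size_ws size_vs => /size0nil -> /size0nil ->.
case: q valid_q size_vs => [|j q] valid_q size_vs addr_pq.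
  by have := addr_nil size_ws addr_pq.
have [sub_p modal_i] := subf_cons valid_p; have [sub_q modal_j] := subf_cons valid_q.
rewrite sub_p in valid_p; rewrite sub_q in valid_q.
move: valid_p valid_q size_ws size_vs addr_pq; rewrite /depth /=.
case: (eqVneq i 2) modal_i => [-> modal_i|i2 modal_i];
  case: (eqVneq j 2) modal_j => [-> modal_j|j2 modal_j] valid_p valid_q; try congruence.
  case: ws => [|w ws] //; case: vs => [|v vs] //= [size_ws] [size_vs] /split_dot [-> addr_pq].
  by case: (IH _ _ _ _ valid_p valid_q size_ws size_vs addr_pq) => -> ->.
rewrite !add0n => size_ws size_vs [ij addr_pq]; subst j.
by case: (IH _ _ _ _ valid_p valid_q size_ws size_vs addr_pq) => -> ->.
Qed.

Section ProjectionDeterminesUnit.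
Variable F0 : formula.
Variable top : nat -> option (seq nat).
Notation pos := (position F0 top).
Notation Om := (Omega F0 top).

(* If every move of the projection on a politeral unit L is also in the
   projection on L', then L' has the path of L and its bitstrings agree with
   those of L up to the prompt height of any round k: Bot's answer to the
   prompt of L at round k carries a numeral used nowhere else, so it must
   come from the same funit of L'. *)
Lemma projection_reflects_prompts (L L' : Un F0) : is_politeral L ->
  (forall b m, proj Om L (b, m) -> proj Om L' (b, m)) -> forall k,
  upath L' = upath L /\
  prefix_tuple (ubits L') (map (fun y => mkseq y (next_height F0 (pos k))) (ubits L)).
Proof.
move=> lit_L projLL' k; set h := next_height F0 (pos k).
set ws := map (fun y => mkseq y h) (ubits L).
have size_ws : size ws = depth (upath L) by rewrite size_map unit_bits_size.
have prompt : addr (upath L) ws \in prompt_addrs F0 (pos k).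
  by apply: prompt_addrs_mem => // w; apply: size_map_mkseq.
have [n answered] := prompt_answered prompt.
have Om_n : Om (false, addr (upath L) ws ++ decimal n) by exists k.+1.
have projL_n : proj Om L (false, decimal n).
  exact: projr_intro (unit_bits_size L) (prefix_tuple_mkseq h (ubits L)) Om_n.
have [ws' [pre' Om_n']] := projr_elim (unit_bits_size L') (projLL' _ _ projL_n).
have addr_eq : addr (upath L) ws = addr (upath L') ws'.
  have := Omega_bot_numeral_inj Om_n Om_n' erefl erefl.
  rewrite /= !numeric_part_decimal; try exact: addr_address_like.
  by move=> /(_ erefl) [/catIr].
have size_ws' : size ws' = depth (upath L') by rewrite (prefix_tuple_size pre') unit_bits_size.
have [-> ws_eq] := addr_inj (@unit_path_valid _ L) (@unit_path_valid _ L') size_ws size_ws' addr_eq.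
by rewrite ws_eq.
Qed.

(* When its
   modal depth is positive, the prompt heights are unbounded, so every bit of
   every bitstring of the unit is eventually recovered. *)
Lemma projection_inj (L L' : Un F0) : is_politeral L ->
  (forall b m, proj Om L (b, m) <-> proj Om L' (b, m)) -> L = L'.
Proof.
move=> lit_L projLL'.
have projLL'_sub b m : proj Om L (b, m) -> proj Om L' (b, m) by move/projLL'.
have [pathLL' _] := projection_reflects_prompts lit_L projLL'_sub 0.
apply: unit_eq => //.
have size_bits : size (ubits L) = size (ubits L') by rewrite !unit_bits_size pathLL'.
apply: (eq_from_nth (x0 := fun _ => false)) => // j jL.
apply: functional_extensionality => i.
have [depth0|depth_pos] := posnP (depth (upath L)); first by move: jL; rewrite unit_bits_size depth0.
have [k ik] := height_unbounded top lit_L depth_pos i.+1.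
have [_ pre] := projection_reflects_prompts lit_L projLL'_sub k.
by rewrite (prefix_tuple_bits pre).
Qed.

End ProjectionDeterminesUnit.

Section VisibilityCountable.
Variable F0 : formula.
Variable top : nat -> option (seq nat).
Notation Om := (Omega F0 top).
Variable A : resolution F0.
Variable G : Un F0.

(* For every unit X, the units strictly driving X form a countable set:
   the unit H through which E drives X is a superunit of X, hence determined
   by its path, and E is determined by H and its own path. *)
Lemma strict_drivers_countable X : countable (fun E => strictly_drives A E X).
Proof.
apply: (countable_sub (Q := fun E => exists H, subunit X H /\ driven_below A H E)).
  by move=> E /strictly_drives_below.
apply: (countable_bind G).
  by apply: (countable_inj G (key := @upath F0)) => H H'; apply: superunit_path_inj.
by move=> H _; apply: (countable_inj G (key := @upath F0)) => E E'; apply: driven_below_path_inj.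
Qed.

(* Every unit has at most one opposite unit. *)
Lemma opposites_countable (M : Un F0) : countable (fun L : Un F0 => opposite Om L M).
Proof.
apply: (countable_inj G (key := fun _ => tt)) => L L' [compl_L proj_L] [_ proj_L'] _.
apply: (projection_inj (top := top)) => [|b m]; last by rewrite proj_L proj_L'.
by move: compl_L; rewrite /is_politeral /complementary; case: (origin L) => [[]|].
Qed.

Definition chain_head (n : nat) (L : Un F0) : Prop :=
  exists M rest, [/\ size rest = n, chain Om A ((L, M) :: rest)
                   & strictly_drives A (last (L, M) rest).2 G].

Lemma opposite_drivers_countable (Q : Un F0 -> Prop) : countable Q ->
  countable (fun L => exists X, Q X /\ exists M, strictly_drives A M X /\ opposite Om L M).
Proof.
move=> countQ; apply: (countable_bind G) => // X _.
apply: (countable_bind G); first exact: strict_drivers_countable.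
by move=> M _; apply: opposites_countable.
Qed.

(* By induction on n: the head of a longer chain is opposite to a strict
   driver of the head of a shorter one; a one-link chain ends at G. *)
Lemma chain_head_countable n : countable (chain_head n).
Proof.
elim: n => [|n IH].
  apply: (countable_sub (Q := fun L => exists X, X = G /\
    exists M, strictly_drives A M X /\ opposite Om L M)).
    by move=> L [M [[|? ?] [//= _ opp drv]]]; exists G; split => //; exists M.
  by apply: opposite_drivers_countable; apply: (countable_inj G (key := fun _ => tt)) => X Y -> ->.
apply: (countable_sub (Q := fun L => exists X, chain_head n X /\
  exists M, strictly_drives A M X /\ opposite Om L M)); last exact: opposite_drivers_countable.
move=> L [M [[|[X M'] rest] [//= [size_rest] [opp [drv chain_rest]] drv_G]]].
by exists X; split; [exists M', rest | exists M].
Qed.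

Lemma visible_countable : countable (fun E => visible Om A E G).
Proof.
apply: (countable_sub (Q := fun E => strictly_drives A E G \/
  exists n, True /\ exists L, chain_head n L /\ strictly_drives A E L)).
  move=> E [drv|[L [M [rest [chain_L [drv drv_G]]]]]]; first by left.
  by right; exists (size rest); split => //; exists L; split => //; exists M, rest.
apply: countable_or; first exact: strict_drivers_countable.
apply: (countable_bind G); first by exists id => n _; exists n.
move=> n _; apply: (countable_bind G); first exact: chain_head_countable.
by move=> L _; apply: strict_drivers_countable.
Qed.

End VisibilityCountable.

Theorem lemma7p7 (F0 : formula) (top : nat -> option (seq nat))
  (Hlegal : legal F0 (Omega F0 top))
  (A : resolution F0) (G : Un F0) :
  countable (fun E : Un F0 => visible (Omega F0 top) A E G).
Proof. exact: visible_countable. Qed.
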